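(* Let $S$ be an inductive left $E$-monoid with left $E$-modal operation $\cdot$, and let $P(E,S)$ be the set $E\times S$ with multiplication $(e,s)*(f,t)=(e\wedge(s\cdot f),\,st)$ and unary operation $D((e,s))=(e,1)$. Then the map $\psi:P(E,S)\to Rest(E,S)$, $\psi((e,s))=(e,es)$, is a surjective semigroup homomorphism satisfying $\psi(D(x))=D(\psi(x))$ for all $x\in P(E,S)$, and $\psi$ is injective on $D(P(E,S))=\{(e,1)\mid e\in E\}$.
   Context: For a semigroup $S$, $E(S)$ is its set of idempotents; for $e,f\in E(S)$, $e\le_r f$ iff $e=ef$. $E\subseteq E(S)$ is right pre-reduced if $e=ef$ and $f=fe$ imply $e=f$ for $e,f\in E$. Let $S$ be a monoid and $1\in E\subseteq E(S)$. $S$ is an inductive left $E$-monoid if $E$ is right pre-reduced, $(E,\le_r)$ is a meet-semilattice with meet $\wedge$, and (I1') for all $t\in S$, $e\in E$ there is $t\cdot e\in E$ such that for all $s\in S$: $ste=st$ iff $s(t\cdot e)=s$ (the map $(t,e)\mapsto t\cdot e$, necessarily unique, is the left $E$-modal operation); (I2') for $s\in S$, $e,f\in E$: $se=sf=s$ implies $s(e\wedge f)=s$. $Rest(E,S)$ is the set $C_E(S)=\{(e,s)\in E\times S\mid es=s\}$ with multiplication $(e,s)(f,t)=(e\wedge(s\cdot f),(e\wedge(s\cdot f))st)$ and $D((e,s))=(e,e)$. *)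

Set Implicit Arguments.

Section Defs.
Variable S : Type.
Variable mul : S -> S -> S.
Variable one : S.

Definition is_monoid : Prop :=
  (forall x y z, mul (mul x y) z = mul x (mul y z)) /\
  (forall x, mul one x = x) /\ (forall x, mul x one = x).

Definition idempotent (e : S) : Prop := mul e e = e.

Definition le_r (e f : S) : Prop := e = mul e f.

Variable E : S -> Prop.

Definition right_pre_reduced : Prop :=
  forall e f, E e -> E f -> e = mul e f -> f = mul f e -> e = f.

Definition is_meet_semilattice (meet : S -> S -> S) : Prop :=
  forall e f, E e -> E f ->
    E (meet e f) /\ le_r (meet e f) e /\ le_r (meet e f) f /\
    (forall g, E g -> le_r g e -> le_r g f -> le_r g (meet e f)).

Definition is_left_E_modal (dot : S -> S -> S) : Prop :=
  forall t e, E e ->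
    E (dot t e) /\
    (forall s, mul (mul s t) e = mul s t <-> mul s (dot t e) = s).

Definition I2' (meet : S -> S -> S) : Prop :=
  forall s e f, E e -> E f -> mul s e = s -> mul s f = s -> mul s (meet e f) = s.

Definition inductive_left_E_monoid (meet dot : S -> S -> S) : Prop :=
  is_monoid /\ E one /\ (forall e, E e -> idempotent e) /\
  right_pre_reduced /\ is_meet_semilattice meet /\
  is_left_E_modal dot /\ I2' meet.

Variables meet dot : S -> S -> S.

(* P(E,S): carrier E x S (pairs (e,s) with E e) *)
Definition P_mul (x y : S * S) : S * S :=
  let (e, s) := x in let (f, t) := y in (meet e (dot s f), mul s t).
Definition P_D (x : S * S) : S * S := (fst x, one).

(* Rest(E,S): carrier C_E(S) = {(e,s) | E e, e s = s} *)
Definition in_CE (x : S * S) : Prop := E (fst x) /\ mul (fst x) (snd x) = snd x.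
Definition Rest_mul (x y : S * S) : S * S :=
  let (e, s) := x in let (f, t) := y in
  let g := meet e (dot s f) in (g, mul g (mul s t)).
Definition Rest_D (x : S * S) : S * S := (fst x, fst x).

Definition psi (x : S * S) : S * S := (fst x, mul (fst x) (snd x)).

End Defs.

From Stdlib Require Import Setoid.

(* Proof strategy.  Write psi(e,s) = (e, es).  Everything reduces to one fact
   about the meets in the product of P(E,S):

     for e in E, the meets  e /\ (s . f)  and  e /\ ((es) . f)  coincide.

   Indeed, an idempotent g <=_r e satisfies g(es) = gs, and by the modal axiom
   (I1') "g <=_r t . f" only depends on gt; so the two meets have the same
   lower bounds below e, and right pre-reducedness forces them to be equal.
   With this, psi(x * y) and psi(x) psi(y) have the same first component, and
   their second components agree because g = e /\ (s . f) satisfies g <=_r e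
   and g s f = g s. *)

Section InductiveLeftEMonoid.

Variable S : Type.
Variable mul : S -> S -> S.
Variable E : S -> Prop.
Variables meet dot : S -> S -> S.

Hypothesis mul_assoc : forall x y z, mul (mul x y) z = mul x (mul y z).
Hypothesis E_idem : forall e, E e -> idempotent mul e.
Hypothesis E_rpr : right_pre_reduced mul E.
Hypothesis E_meet : is_meet_semilattice mul E meet.
Hypothesis E_modal : is_left_E_modal mul E dot.

Lemma le_dot_iff (g t f : S) :
  E f -> le_r mul g (dot t f) <-> mul (mul g t) f = mul g t.
Proof.
  intros Hf; unfold le_r.
  destruct (E_modal t f Hf) as [_ Hmodal].
  split; intros H.
  - apply (proj2 (Hmodal g)); symmetry; exact H.
  - symmetry; apply (proj1 (Hmodal g)); exact H.
Qed.

Lemma le_r_absorb (g e s : S) : le_r mul g e -> mul g (mul e s) = mul g s.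
Proof.
  intros Hge; unfold le_r in Hge.
  rewrite <- mul_assoc, <- Hge; reflexivity.
Qed.

Lemma meet_congr (e a b : S) :
  E e -> E a -> E b ->
  (forall g, E g -> le_r mul g e -> (le_r mul g a <-> le_r mul g b)) ->
  meet e a = meet e b.
Proof.
  intros He Ha Hb Hlow.
  destruct (E_meet e a He Ha) as [Hga [Hga_e [Hga_a Hga_max]]].
  destruct (E_meet e b He Hb) as [Hgb [Hgb_e [Hgb_b Hgb_max]]].
  apply E_rpr; auto.
  - apply Hgb_max; auto. apply (Hlow (meet e a) Hga Hga_e); exact Hga_a.
  - apply Hga_max; auto. apply (Hlow (meet e b) Hgb Hgb_e); exact Hgb_b.
Qed.

Lemma meet_dot_restrict (e s f : S) :
  E e -> E f -> meet e (dot (mul e s) f) = meet e (dot s f).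
Proof.
  intros He Hf.
  destruct (E_modal s f Hf) as [Hds _].
  destruct (E_modal (mul e s) f Hf) as [Hdes _].
  apply meet_congr; auto.
  intros g _ Hge.
  rewrite (le_dot_iff g s f Hf), (le_dot_iff g (mul e s) f Hf), (le_r_absorb g e s Hge).
  reflexivity.
Qed.

Lemma meet_dot_mul (e s f t : S) :
  E e -> E f ->
  mul (meet e (dot s f)) (mul (mul e s) (mul f t)) = mul (meet e (dot s f)) (mul s t).
Proof.
  intros He Hf.
  destruct (E_modal s f Hf) as [Hds _].
  destruct (E_meet e (dot s f) He Hds) as [_ [Hge [Hgd _]]].
  set (g := meet e (dot s f)) in *.
  assert (Hgsf : mul (mul g s) f = mul g s) by (apply le_dot_iff; assumption).
  rewrite mul_assoc, (le_r_absorb g e (mul s (mul f t)) Hge).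
  rewrite <- (mul_assoc s f t), <- (mul_assoc g (mul s f) t), <- (mul_assoc g s f), Hgsf.
  apply mul_assoc.
Qed.

Lemma psi_in_CE (x : S * S) : E (fst x) -> in_CE mul E (psi mul x).
Proof.
  destruct x as [e s]; unfold in_CE, psi; simpl; intros He.
  split; [exact He|].
  rewrite <- mul_assoc, (E_idem e He); reflexivity.
Qed.

Lemma psi_mul (x y : S * S) :
  E (fst x) -> E (fst y) ->
  psi mul (P_mul mul meet dot x y) = Rest_mul mul meet dot (psi mul x) (psi mul y).
Proof.
  destruct x as [e s], y as [f t]; simpl; intros He Hf.
  unfold psi, P_mul, Rest_mul; simpl.
  rewrite (meet_dot_restrict e s f He Hf), (meet_dot_mul e s f t He Hf); reflexivity.
Qed.

End InductiveLeftEMonoid.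

Lemma psi_fixes_CE (S : Type) (mul : S -> S -> S) (E : S -> Prop) (y : S * S) :
  in_CE mul E y -> psi mul y = y.
Proof.
  destruct y as [e s]; unfold in_CE, psi; simpl; intros [_ Hs].
  rewrite Hs; reflexivity.
Qed.

Theorem proposition6p1 (S : Type) (mul : S -> S -> S) (one : S) (E : S -> Prop)
  (meet dot : S -> S -> S) :
  inductive_left_E_monoid mul one E meet dot ->
  (* psi maps P(E,S) into Rest(E,S) *)
  (forall x : S * S, E (fst x) -> in_CE mul E (psi mul x)) /\
  (* surjective *)
  (forall y : S * S, in_CE mul E y -> exists x : S * S, E (fst x) /\ psi mul x = y) /\
  (* semigroup homomorphism *)
  (forall x y : S * S, E (fst x) -> E (fst y) ->
     psi mul (P_mul mul meet dot x y) = Rest_mul mul meet dot (psi mul x) (psi mul y)) /\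
  (* compatible with D *)
  (forall x : S * S, E (fst x) -> psi mul (P_D one x) = Rest_D (psi mul x)) /\
  (* injective on D(P(E,S)) = {(e,1) | e in E} *)
  (forall e f : S, E e -> E f -> psi mul (e, one) = psi mul (f, one) -> e = f).
Proof.
  intros [[assoc [_ mul_one]] [_ [idem [rpr [msl [modal _]]]]]].
  split; [|split; [|split; [|split]]].
  - intros x; apply psi_in_CE; assumption.
  - intros y Hy; exists y; split; [apply Hy | exact (psi_fixes_CE S mul E y Hy)].
  - intros x y; apply psi_mul; assumption.
  - intros [e s] _; unfold psi, P_D, Rest_D; simpl; rewrite mul_one; reflexivity.
  - intros e f _ _ Hpsi; unfold psi in Hpsi; simpl in Hpsi; congruence.
Qed.
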